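(* Let $A \in M_n(\mathbb{C})$ be a normal matrix (i.e. $AA^*=A^*A$) which is $r_A$-row regular. Then $A$ is also $r_A$-column regular; in particular, $A$ is a semimagic square.
   Context: An $n\times n$ complex matrix $A=(a_{ij})$ is $r_A$-row regular if $\sum_{j=1}^n a_{ij}=r_A$ for every row $i$, and $c_A$-column regular if $\sum_{i=1}^n a_{ij}=c_A$ for every column $j$. A semimagic square is a matrix that is both $r_A$-row regular and $c_A$-column regular with $r_A=c_A$. $A^*$ denotes the conjugate transpose. *)

From HB Require Import structures.
From mathcomp Require Import all_boot all_order all_algebra.
From mathcomp Require Import complex.
From mathcomp Require Import reals.
Set Implicit Arguments. Unset Strict Implicit. Unset Printing Implicit Defensive.
Import Order.TTheory GRing.Theory Num.Theory.
Local Open Scope ring_scope.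

Definition conjT (C : numClosedFieldType) (m n : nat) (A : 'M[C]_(m, n)) : 'M[C]_(n, m) :=
  \matrix_(i < n, j < m) (A j i)^*.

Definition normal_mx (C : numClosedFieldType) (n : nat) (A : 'M[C]_n) : Prop :=
  A *m conjT A = conjT A *m A.

Definition row_regular (C : numClosedFieldType) (n : nat) (A : 'M[C]_n) (r : C) : Prop :=
  forall i : 'I_n, \sum_(j < n) A i j = r.

Definition col_regular (C : numClosedFieldType) (n : nat) (A : 'M[C]_n) (c : C) : Prop :=
  forall j : 'I_n, \sum_(i < n) A i j = c.

Definition semimagic (C : numClosedFieldType) (n : nat) (A : 'M[C]_n) : Prop :=
  exists r : C, row_regular A r /\ col_regular A r.

From HB Require Import structures.
From mathcomp Require Import all_boot all_order all_algebra.
From mathcomp Require Import complex.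
From mathcomp Require Import reals.
Import Order.TTheory GRing.Theory Num.Theory.
Local Open Scope ring_scope.

(* For a normal matrix N, |N v|^2 = v^* N^* N v = v^* N N^* v = |N^* v|^2, so N and
   N^* have the same kernel; applied to N = A - r I this makes every eigenvector of
   A an eigenvector of A^* for the conjugate eigenvalue.  Row regularity says that
   the all-ones vector is an eigenvector of A for r, and column regularity that it
   is an eigenvector of A^* for r^*. *)

Section ConjTranspose.
Variable C : numClosedFieldType.

Lemma conjT_mulmx m n p (X : 'M[C]_(m, n)) (Y : 'M[C]_(n, p)) :
  conjT (X *m Y) = conjT Y *m conjT X.
Proof.
apply/matrixP => i j; rewrite !mxE rmorph_sum; apply: eq_bigr => k _.
by rewrite !mxE rmorphM mulrC.
Qed.

Lemma conjTK m n (X : 'M[C]_(m, n)) : conjT (conjT X) = X.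
Proof. by apply/matrixP => i j; rewrite !mxE conjCK. Qed.

Lemma conjTB m n (X Y : 'M[C]_(m, n)) : conjT (X - Y) = conjT X - conjT Y.
Proof. by apply/matrixP => i j; rewrite !mxE rmorphB. Qed.

Lemma conjT_scalar_mx n (a : C) : conjT (a%:M : 'M_n) = (a^*)%:M.
Proof. by apply/matrixP => i j; rewrite !mxE eq_sym rmorphMn. Qed.

Lemma conjT_mulmx_self_eq0 m (w : 'cV[C]_m) : conjT w *m w = 0 -> w = 0.
Proof.
move=> /matrixP/(_ 0 0); rewrite !mxE => w_norm0.
have sum_sq0 : \sum_(k < m) `|w k 0| ^+ 2 = 0.
  by rewrite -[RHS]w_norm0; apply: eq_bigr => k _; rewrite normCKC mxE.
apply/matrixP => i j; rewrite ord1 mxE; apply/eqP.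
have /eqP := psumr_eq0P (fun k _ => exprn_ge0 2 (normr_ge0 (w k 0))) sum_sq0 (i := i) isT.
by rewrite expf_eq0 normr_eq0.
Qed.

Lemma normal_mxB_scalar n (X : 'M[C]_n) (a : C) :
  normal_mx X -> normal_mx (X - a%:M).
Proof.
rewrite /normal_mx conjTB conjT_scalar_mx !mulmxBl !mulmxBr => ->.
rewrite [X *m _]scalar_mxC -[a%:M *m conjT X]scalar_mxC [a%:M *m _]scalar_mxC.
by rewrite !opprB !addrA addrAC [RHS]addrAC; congr (_ + _); rewrite addrAC.
Qed.

Lemma normal_mx_mulmx_eq0 n (N : 'M[C]_n) (v : 'cV[C]_n) :
  normal_mx N -> N *m v = 0 -> conjT N *m v = 0.
Proof.
move=> normalN Nv0; apply: conjT_mulmx_self_eq0.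
rewrite conjT_mulmx conjTK !mulmxA -[_ *m N *m _]mulmxA normalN.
by rewrite mulmxA -mulmxA Nv0 mulmx0.
Qed.

Lemma normal_mx_eigenvector n (N : 'M[C]_n) (v : 'cV[C]_n) (a : C) :
  normal_mx N -> N *m v = a *: v -> conjT N *m v = a^* *: v.
Proof.
move=> normalN Nv; apply/eqP; rewrite -subr_eq0 -mul_scalar_mx -mulmxBl.
rewrite -conjT_scalar_mx -conjTB; apply/eqP/normal_mx_mulmx_eq0.
  exact: normal_mxB_scalar.
by rewrite mulmxBl mul_scalar_mx Nv subrr.
Qed.

Lemma row_regular_ones n (A : 'M[C]_n) (r : C) :
  row_regular A r <-> A *m const_mx 1 = r *: (const_mx 1 : 'cV_n).
Proof.
have mulmx_ones i : (A *m (const_mx 1 : 'cV_n)) i 0 = \sum_(j < n) A i j.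
  by rewrite mxE; apply: eq_bigr => j _; rewrite mxE mulr1.
split=> [rowA | /matrixP Aones i].
  by apply/matrixP => i k; rewrite ord1 mulmx_ones rowA !mxE mulr1.
by have := Aones i 0; rewrite mulmx_ones !mxE mulr1.
Qed.

Lemma col_regular_ones n (A : 'M[C]_n) (c : C) :
  col_regular A c <-> conjT A *m const_mx 1 = c^* *: (const_mx 1 : 'cV_n).
Proof.
have conjT_ones j : (conjT A *m (const_mx 1 : 'cV_n)) j 0 = (\sum_(i < n) A i j)^*.
  by rewrite mxE rmorph_sum; apply: eq_bigr => i _; rewrite !mxE mulr1.
split=> [colA | /matrixP Aones j].
  by apply/matrixP => j k; rewrite ord1 conjT_ones colA !mxE mulr1.
by have := Aones j 0; rewrite conjT_ones !mxE mulr1 => /(canRL conjCK); rewrite conjCK.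
Qed.

End ConjTranspose.

Theorem mainTheorem2 (R : realType) (n : nat) (A : 'M[R[i]]_n) (rA : R[i]) :
  normal_mx A -> row_regular A rA -> col_regular A rA /\ semimagic A.
Proof.
move=> normalA rowA.
have colA : col_regular A rA.
  by apply/col_regular_ones/normal_mx_eigenvector => //; apply/row_regular_ones.
by split => //; exists rA.
Qed.
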